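(* For every $k\ge2$ and every $n\ge1$, the families $\mathrm{SLT}_k$ and $\mathrm{RL}_n^V$ are incomparable (neither is contained in the other); likewise, for every $n\ge1$, $\mathrm{SLT}$ and $\mathrm{RL}_n^V$ are incomparable.
   Context: Strictly locally testable languages: let $V$ be an alphabet and $k\ge1$. For $B,I,E\subseteq V^k$ and $F\subseteq V^{\le k-1}$, $\mathrm{slt}(B,I,E,F)$ is the language over $V$ consisting of all words in $F$ together with all words $a_1\cdots a_n$ ($a_i\in V$, $n\ge k$) with $a_1\cdots a_k\in B$, $a_{j+1}\cdots a_{j+k}\in I$ for all $1\le j\le n-k-1$, and $a_{n-k+1}\cdots a_n\in E$. $\mathrm{SLT}_k$ is the family of languages of this form and $\mathrm{SLT}=\bigcup_{k\ge1}\mathrm{SLT}_k$. A right-linear grammar is $G=(N,T,P,S)$ with rules $A\to wB$ or $A\to w$ ($A,B\in N$, $w\in T^*$). For a regular language $L$, $\mathrm{Var}_{RL}(L)$ is the minimum of $|N|$ over all right-linear grammars generating $L$; $\mathrm{RL}_n^V=\{L\text{ regular}:\mathrm{Var}_{RL}(L)\le n\}$. *)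

From mathcomp Require Import all_boot.
Set Implicit Arguments. Unset Strict Implicit. Unset Printing Implicit Defensive.

Definition lang (V : Type) := seq V -> Prop.

(* slt(B,I,E,F) for window length k, following the paper literally:
   words of F, together with words a_1..a_n (n >= k) whose prefix of length k
   is in B, whose factors a_{j+1}..a_{j+k} (1 <= j <= n-k-1) are in I and whose
   suffix of length k is in E. *)
Definition slt (V : Type) (k : nat) (B I E F : lang V) : lang V :=
  fun w => F w \/
    [/\ k <= size w, B (take k w),
        (forall j, 1 <= j -> j <= size w - k - 1 -> I (take k (drop j w)))
      & E (drop (size w - k) w)].

Definition SLTk (V : Type) (k : nat) (L : lang V) : Prop :=
  exists B I E F : lang V,
    [/\ (forall x, B x -> size x = k), (forall x, I x -> size x = k),
        (forall x, E x -> size x = k), (forall x, F x -> size x <= k.-1)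
      & forall w, L w <-> slt k B I E F w].

Definition SLT (V : Type) (L : lang V) : Prop :=
  exists k, 1 <= k /\ SLTk k L.

(* Right-linear grammars with nonterminal set 'I_m (so |N| = m), start symbol S,
   terminal alphabet V, and a finite list of rules (A, w, Some B) for A -> wB
   and (A, w, None) for A -> w.  rl_derives P A w : A =>* w. *)
Inductive rl_derives (V : eqType) (m : nat)
    (P : seq ('I_m * seq V * option 'I_m)) : 'I_m -> seq V -> Prop :=
| rld_term A u : (A, u, None) \in P -> rl_derives P A u
| rld_step A u B w : (A, u, Some B) \in P -> rl_derives P B w ->
    rl_derives P A (u ++ w).

Definition generated_by_RLG (V : eqType) (m : nat) (L : lang V) : Prop :=
  exists (S : 'I_m) (P : seq ('I_m * seq V * option 'I_m)),
    forall w, L w <-> rl_derives P S w.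

(* RL_n^V: regular languages with Var_RL(L) <= n, i.e. generated by some
   right-linear grammar with at most n nonterminals (such languages are
   regular, and Var_RL(L) <= n iff such a grammar exists). *)
Definition RLnV (V : eqType) (n : nat) (L : lang V) : Prop :=
  exists m, m <= n /\ generated_by_RLG m L.

Definition not_included (Fam1 Fam2 : forall V : finType, lang V -> Prop) : Prop :=
  exists (V : finType) (L : lang V), Fam1 V L /\ ~ Fam2 V L.

Definition incomparable (Fam1 Fam2 : forall V : finType, lang V -> Prop) : Prop :=
  not_included Fam1 Fam2 /\ not_included Fam2 Fam1.

From mathcomp Require Import all_boot zify.
Set Implicit Arguments. Unset Strict Implicit. Unset Printing Implicit Defensive.

(* 1. The language [Lconst] of nonempty words a^p using a single letter a.  A
      window of length k >= 2 sees two consecutive letters, so "all windows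
      constant" forces the whole word to be constant: [Lconst] is in SLT_k for
      every k >= 2.  Over an alphabet of N letters, however, a right-linear
      grammar for [Lconst] needs at least N nonterminals: by a pumping argument
      every letter i owns a reachable, productive nonterminal carrying a loop
      labelled by a nonempty word of i's, and two letters sharing such a
      nonterminal would let the grammar derive a mixed word.  With N = n + 1
      this puts [Lconst] outside RL_n^V.

   2. The language [Leven] of even-length words over a one-letter alphabet is
      generated by S -> aaS | eps (one nonterminal), but it is in no SLT_k:
      over one letter, all k-windows coincide, so a word of length 2k+2 and one
      of length 2k+3 are accepted or rejected together. *)

Section RightLinearPaths.
Variables (V : eqType) (m : nat) (P : seq ('I_m * seq V * option 'I_m)).

Definition max_rule_length : nat := \max_(r <- P) size r.1.2.

Lemma max_rule_lengthP r : r \in P -> size r.1.2 <= max_rule_length.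
Proof. by move=> rP; apply: (leq_bigmax_seq (F := fun r => size r.1.2)). Qed.

Inductive reach : 'I_m -> seq V -> 'I_m -> Prop :=
| reach_nil A : reach A [::] A
| reach_step A u B w C : (A, u, Some B) \in P -> reach B w C -> reach A (u ++ w) C.

Lemma reach_derives A x B y :
  reach A x B -> rl_derives P B y -> rl_derives P A (x ++ y).
Proof.
elim=> [//|A' u B' w C ruleA _ IH] /IH derB.
by rewrite -catA; apply: rld_step ruleA derB.
Qed.

Lemma derives_reach A w : rl_derives P A w ->
  exists x B u, [/\ reach A x B, (B, u, None) \in P & w = x ++ u].
Proof.
elim=> [A' u ruleA | A' u B' w' ruleA _ [x [B [u' [rB ruleB ->]]]]].
  by exists [::], A', u; split=> //; apply: reach_nil.
exists (u ++ x), B, u'; split; [exact: reach_step ruleA rB | by [] | by rewrite catA].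
Qed.

(* [spath A w C s]: a path from A to C reading w whose visited nonterminals,
   the last one C excluded, are listed in s. *)
Inductive spath : 'I_m -> seq V -> 'I_m -> seq 'I_m -> Prop :=
| spath_nil C : spath C [::] C [::]
| spath_step A u B w C s : (A, u, Some B) \in P -> spath B w C s ->
    spath A (u ++ w) C (A :: s).

Lemma spath_reach A w C s : spath A w C s -> reach A w C.
Proof.
by elim=> [C'|A' u B w' C' s' rule _ IH]; [apply: reach_nil | apply: reach_step rule IH].
Qed.

Lemma spath_size A w C s : spath A w C s -> size w <= max_rule_length * size s.
Proof.
elim=> [//|A' u B w' C' s' rule _ IH].
by rewrite size_cat /= mulnS leq_add // (max_rule_lengthP rule).
Qed.

Lemma spath_split B w C s A : spath B w C s -> A \in s ->
  exists x w' s', [/\ w = x ++ w', reach B x A, spath A w' C s' & subseq s' s].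
Proof.
elim=> [//|A' u B' w' C' s' rule sp IH]; rewrite in_cons.
have [-> _|neA /= As'] := eqVneq A A'.
  exists [::], (u ++ w'), (A' :: s'); split=> //; first exact: reach_nil.
  exact: spath_step rule sp.
have [x [w'' [s'' [-> rx sp'' sub]]]] := IH As'.
exists (u ++ x), w'', s''; split; [by rewrite catA | exact: reach_step rule rx | by [] |].
exact: subseq_trans sub (subseq_cons _ _).
Qed.

Definition pump A w C := exists x v y B,
  [/\ w = x ++ v ++ y, v != [::], reach A x B, reach B v B & reach B y C].

Lemma pump_or_simple A w C : reach A w C ->
  pump A w C \/ exists s, spath A w C s /\ uniq (C :: s).
Proof.
elim=> [A' | A' u B w' C' rule rB [[x [v [y [D [-> nv rx rv ry]]]]] | [s [sp us]]]].
- by right; exists [::]; split=> //; apply: spath_nil.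
- left; exists (u ++ x), v, y, D; split=> //; by [rewrite catA | exact: reach_step rule rx].
have loop_at_A x w'' : u ++ x != [::] -> reach B x A' -> reach A' w'' C' ->
    u ++ w' = (u ++ x) ++ w'' -> pump A' (u ++ w') C'.
  move=> nux rx rw ew; exists [::], (u ++ x), w'', A'.
  by split=> //; [apply: reach_nil | apply: reach_step rule rx].
have [eAC|nAC] := eqVneq A' C'.
  subst C'; have [e|ne] := eqVneq (u ++ w') [::].
    by right; exists [::]; rewrite e; split=> //; apply: spath_nil.
  by left; apply: (loop_at_A w' [::]) => //; [apply: reach_nil | rewrite cats0].
have [As|nAs] := boolP (A' \in s).
  have [x [w'' [s' [ew rx sp' sub]]]] := spath_split sp As.
  have [e|ne] := eqVneq (u ++ x) [::].
    right; exists s'; split; first by rewrite ew catA e.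
    by apply: subseq_uniq us; rewrite /= eqxx.
  by left; apply: (loop_at_A x w'') => //; [exact: spath_reach sp' | rewrite ew catA].
right; exists (A' :: s); split; first exact: spath_step rule sp.
by move: us; rewrite /= in_cons negb_or eq_sym nAC nAs.
Qed.

Lemma pumping A w C : reach A w C -> max_rule_length * m < size w -> pump A w C.
Proof.
case/pump_or_simple=> // -[s [sp us]] long.
have size_s : size s < m.
  have := max_card (mem (C :: s)); rewrite card_ord (card_uniqP us) /=; lia.
have := leq_trans (spath_size sp) (leq_mul (leqnn max_rule_length) (ltnW size_s)).
by rewrite leqNgt long.
Qed.

End RightLinearPaths.

Definition Lconst (T : Type) (w : seq T) : Prop := exists (a : T) p, w = nseq p.+1 a.

Section ConstantWordsLowerBound.
Variables (N m : nat) (S : 'I_m) (P : seq ('I_m * seq 'I_N * option 'I_m)).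
Hypothesis gen : forall w, Lconst w <-> rl_derives P S w.

Definition letter_loop (a : 'I_N) (B : 'I_m) : Prop := exists x v y,
  [/\ reach P S x B, reach P B v B, rl_derives P B y, v != [::] & all (pred1 a) v].

(* Pumping a long enough word a^p of the language yields a loop for a. *)
Lemma letter_loop_exists a : exists B, letter_loop a B.
Proof.
set K := max_rule_length P.
have : Lconst (nseq (K * m + K).+1 a) by exists a, (K * m + K).
move/gen/derives_reach=> [x [B0 [u [rx ruleB0 ew]]]].
have long_x : K * m < size x.
  have le_u : size u <= K := max_rule_lengthP ruleB0.
  have e : size x + size u = (K * m + K).+1 by rewrite -size_cat -ew size_nseq.
  clearbody K; lia.
have [x1 [v [y [B [ex nv r1 rv ry]]]]] := pumping rx long_x.
exists B, x1, v, (y ++ u); split=> //; first exact: reach_derives ry (rld_term ruleB0).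
by have := all_pred1_nseq a (K * m + K).+1; rewrite ew ex !all_cat => /andP[/and3P[]].
Qed.

(* Two letters sharing a loop nonterminal let the grammar mix them. *)
Lemma letter_loop_unique a b B : letter_loop a B -> letter_loop b B -> a = b.
Proof.
move=> [x [v [y [rx rv dy nv av]]]] [_ [v' [_ [_ rv' _ nv' bv']]]].
have /gen [c [p ec]] : rl_derives P S (x ++ v ++ v' ++ y).
  exact: reach_derives rx (reach_derives rv (reach_derives rv' dy)).
have := all_pred1_nseq c p.+1; rewrite -ec !all_cat => /and4P[_ cv cv' _].
have same_letter (d e : 'I_N) (s : seq 'I_N) :
    s != [::] -> all (pred1 d) s -> all (pred1 e) s -> d = e.
  by case: s => [//|z s] _ /= /andP[/eqP-> _] /andP[/eqP-> _].
by rewrite (same_letter _ _ _ nv av cv) (same_letter _ _ _ nv' bv' cv').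
Qed.

Lemma Lconst_nonterminals : N <= m.
Proof.
have [f loop_f] := fin_all_exists letter_loop_exists.
have f_inj : injective f by move=> a b fab; apply: letter_loop_unique (loop_f a) _; rewrite fab.
by have := leq_card f f_inj; rewrite !card_ord.
Qed.

End ConstantWordsLowerBound.

Lemma Lconst_not_RL n : ~ RLnV n (@Lconst 'I_n.+1).
Proof. by move=> [m [le_mn [S [P gen]]]]; have := Lconst_nonterminals gen; lia. Qed.

Lemma nth_window (T : Type) (x0 : T) k j w i :
  i < k -> nth x0 (take k (drop j w)) i = nth x0 w (j + i).
Proof. by move=> lt_ik; rewrite nth_take // nth_drop. Qed.

(* Consecutive windows of length k >= 2 overlap, so if every window is
   constant and the first one is c^k, the whole word is constant. *)
Lemma constant_windows (T : eqType) k (w : seq T) c : 2 <= k -> k <= size w ->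
  (forall j, j <= size w - k -> exists d, take k (drop j w) = nseq k d) ->
  take k w = nseq k c -> w = nseq (size w) c.
Proof.
move=> k2 kw windows first.
have window_letter j d i : take k (drop j w) = nseq k d -> i < k -> nth c w (j + i) = d.
  by move=> wd lt_ik; rewrite -(nth_window _ _ _ lt_ik) wd nth_nseq lt_ik.
(* positions t and t + 1 both lie in the window starting at min t (size w - k) *)
have letter t : t < size w -> nth c w t = c.
  elim: t => [lt0|t IH lt_t1]; first by rewrite -[0]/(0 + 0) (window_letter 0 c) ?drop0 //; lia.
  set j := minn t (size w - k).
  have [d wd] := windows j (geq_minr _ _).
  have d_c : d = c.
    by rewrite -(window_letter j d (t - j)) ?subnKC ?IH //; lia.
  by rewrite -(subnKC (_ : j <= t.+1)) ?(window_letter j d) //; lia.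
apply: (eq_from_nth (x0 := c)); first by rewrite size_nseq.
by move=> t lt_t; rewrite nth_nseq lt_t letter.
Qed.

(* For k >= 2, [Lconst] is k-strictly locally testable: take B = I = E = the
   constant words of length k and F = the constant words shorter than k. *)
Lemma Lconst_SLT (T : eqType) k : 2 <= k -> SLTk k (@Lconst T).
Proof.
move=> k2; pose Ck (x : seq T) := exists c, x = nseq k c.
have size_Ck x : Ck x -> size x = k by move=> [c ->]; rewrite size_nseq.
exists Ck, Ck, Ck, (fun x => Lconst x /\ size x <= k.-1); split=> //; first by move=> x [].
move=> w; split.
  move=> [a [p ->]]; have [short|long] := leqP p.+1 k.-1.
    by left; split; [exists a, p | rewrite size_nseq].
  right; rewrite size_nseq; split; first lia.
  - by exists a; rewrite take_nseq //; lia.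
  - by move=> j _ j_le; exists a; rewrite drop_nseq take_nseq //; lia.
  - by exists a; rewrite drop_nseq; congr nseq; lia.
case=> [[] // | [kw [c first] inner last]].
exists c, (size w).-1; rewrite prednK; last lia.
apply: (constant_windows k2 kw) (first) => j j_le.
have [->|j0] := eqVneq j 0; first by rewrite drop0; exists c.
have [->|j_lt] := eqVneq j (size w - k); last by apply: inner; lia.
by rewrite take_oversize; [exact: last | rewrite size_drop; lia].
Qed.

Lemma unary_word_eq (x y : seq unit) : size x = size y -> x = y.
Proof. by elim: x y => [|[] x IH] [|[] y] //= [/IH ->]. Qed.

(* Over a one-letter alphabet, a word of length >= k + 2 in slt(B,I,E,F) has
   all its k-windows accepted (and there is at least one inner window), so
   every word of length >= k is accepted too. *)
Lemma slt_unary_long k (B I E F : lang unit) (x y : seq unit) :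
  (forall z, F z -> size z <= k.-1) -> k.+2 <= size x -> k <= size y ->
  slt k B I E F x -> slt k B I E F y.
Proof.
move=> sizeF x_long y_long [/sizeF|[_ Bx Ix Ex]]; first lia.
right; split=> //.
- by rewrite (@unary_word_eq (take k y) (take k x)) // !size_takel //; lia.
- move=> j j1 j_le; rewrite (@unary_word_eq (take k (drop j y)) (take k (drop 1 x))); last first.
    by rewrite !size_takel ?size_drop //; lia.
  by apply: Ix; lia.
- by rewrite (@unary_word_eq (drop (size y - k) y) (drop (size x - k) x)) // !size_drop; lia.
Qed.

Definition Leven (w : seq unit) : Prop := ~~ odd (size w).

Lemma Leven_RL : generated_by_RLG 1 Leven.
Proof.
exists ord0, [:: (ord0, [:: tt; tt], Some ord0); (ord0, [::], None)] => w; split.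
  rewrite /Leven => even_w.
  have -> : w = nseq (size w)./2.*2 tt.
    by apply: unary_word_eq; rewrite size_nseq halfK (negbTE even_w) subn0.
  elim: (size w)./2 => [|p IH]; first by apply: rld_term; rewrite !inE.
  by rewrite doubleS -[nseq _ _]/([:: tt; tt] ++ _); apply: rld_step IH; rewrite !inE.
elim=> [A u | A u B w' rule _ IH]; first by rewrite !inE => /orP[/eqP[]|/eqP[_ ->]].
by move: rule IH; rewrite !inE /Leven => /orP[/eqP[_ -> _]|/eqP[]] //=; rewrite negbK.
Qed.

(* Parity is not locally testable: lengths 2k+2 and 2k+3 cannot be told apart. *)
Lemma Leven_not_SLT k : ~ SLTk k Leven.
Proof.
move=> [B [I [E [F [_ _ _ sizeF defL]]]]].
have /defL even_accepted : Leven (nseq k.*2.+2 tt) by rewrite /Leven size_nseq /= odd_double.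
have /defL : slt k B I E F (nseq k.*2.+3 tt).
  by apply: slt_unary_long sizeF _ _ even_accepted; rewrite size_nseq -addnn; lia.
by rewrite /Leven size_nseq /= odd_double.
Qed.

Lemma Leven_RLnV n : 1 <= n -> RLnV n Leven.
Proof. by move=> n1; exists 1; split=> //; exact: Leven_RL. Qed.

Theorem mainTheorem13 :
  (forall k n : nat, 2 <= k -> 1 <= n ->
     incomparable (fun V L => SLTk k L) (fun V L => RLnV n L)) /\
  (forall n : nat, 1 <= n ->
     incomparable (fun V L => SLT L) (fun V L => RLnV n L)).
Proof.
split=> [k n k2 n1 | n n1]; split.
- by exists ('I_n.+1 : finType), (@Lconst _); split; [exact: Lconst_SLT | exact: Lconst_not_RL].
- by exists (unit : finType), Leven; split; [exact: Leven_RLnV | exact: Leven_not_SLT].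
- exists ('I_n.+1 : finType), (@Lconst _); split; last exact: Lconst_not_RL.
  by exists 2; split=> //; exact: Lconst_SLT.
- exists (unit : finType), Leven; split; first exact: Leven_RLnV.
  by move=> [k [_ /Leven_not_SLT]].
Qed.
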